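(* Let $\kappa$ be a regular infinite cardinal and $\mu$ a singular cardinal with $\mathrm{cf}(\mu)=\kappa$. The spaces $({}^{\mu}2,\mu)$ and $({}^{\mu}\kappa,\mu)$ are homeomorphic.
   Context: For ordinals $\delta,\rho$, ${}^{\delta}\rho$ is the set of functions $\delta\to\rho$; for a partial function $s\colon\delta\rightharpoonup\rho$, $[s]=\{f\in{}^{\delta}\rho: s\subseteq f\}$. The ${<}\mu$-box topology on ${}^{\delta}\rho$ has base $\{[s]: |\mathrm{dom}(s)|<\mu\}$; $(X,\mu)$ denotes $X$ with this topology. *)

From mathcomp Require Import all_boot.
From mathcomp Require Import boolp classical_sets functions cardinality.
Set Implicit Arguments. Unset Strict Implicit. Unset Printing Implicit Defensive.
Local Open Scope classical_set_scope.
Local Open Scope card_scope.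

Definition card_lt T U (A : set T) (B : set U) : Prop := (A #<= B) /\ ~ (B #<= A).

(* An ordinal is represented by a type T with a strict well-order lt. *)
Definition strict_well_order T (lt : T -> T -> Prop) : Prop :=
  (forall x, ~ lt x x) /\
  (forall x y z, lt x y -> lt y z -> lt x z) /\
  (forall x y, lt x y \/ x = y \/ lt y x) /\
  well_founded lt.

(* (T, lt) is an initial ordinal, i.e. a cardinal: a well-order each of whose
   proper initial segments has strictly smaller cardinality than T. *)
Definition is_cardinal T (lt : T -> T -> Prop) : Prop :=
  strict_well_order lt /\ forall x, card_lt [set y | lt y x] [set: T].

Definition cofinal T (lt : T -> T -> Prop) (S : set T) : Prop :=
  forall x, exists2 y, S y & ~ lt y x.

Definition cf_is T (lt : T -> T -> Prop) K : Prop :=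
  (exists2 S, cofinal lt S & S #= [set: K]) /\
  (forall S, cofinal lt S -> [set: K] #<= S).

Definition regular_infinite_cardinal K (lt : K -> K -> Prop) : Prop :=
  is_cardinal lt /\ infinite_set [set: K] /\ cf_is lt K.

Definition singular_cardinal M (lt : M -> M -> Prop) : Prop :=
  is_cardinal lt /\ infinite_set [set: M] /\
  exists K, cf_is lt K /\ card_lt [set: K] [set: M].

(* The <mu-box topology on D -> R, where mu = |D|: base sets
   [s] = {f | s ⊆ f} for partial s : D ⇀ R with |dom s| < mu. *)
Definition box_basic D R (S : set D) (s : D -> R) : set (D -> R) :=
  [set f | forall i, S i -> f i = s i].

Definition box_open D R (U : set (D -> R)) : Prop :=
  forall f, U f -> exists S : set D, exists s : D -> R,
    card_lt S [set: D] /\ box_basic S s f /\ box_basic S s `<=` U.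

Definition homeomorphic X Y (openX : set X -> Prop) (openY : set Y -> Prop) : Prop :=
  exists (h : X -> Y) (g : Y -> X),
    cancel h g /\ cancel g h /\
    (forall V, openY V -> openX (h @^-1` V)) /\
    (forall U, openX U -> openY (g @^-1` U)).

(* Hessenberg's theorem
   (|A * A| = |A| for infinite A, proved here by Zorn's lemma) gives bijections
   M ~ M * K and (K -> bool) ~ (K -> K).  Through the first one a map M -> X is a
   map M -> (K -> X) on the fibers, and the second one acts fiberwise.  A value of
   the transformed map depends only on the |K| coordinates of one fiber, and
   fewer than |M| coordinates lie in fewer than |M| fibers, whose union still has
   fewer than |M| points; hence both directions pull basic open sets back to open
   sets. *)

From mathcomp Require Import all_boot.
From mathcomp Require Import boolp classical_sets functions cardinality.
Set Implicit Arguments. Unset Strict Implicit. Unset Printing Implicit Defensive.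
Local Open Scope classical_set_scope.
Local Open Scope card_scope.

Lemma card_le_inj T U (A : set T) (B : set U) (f : T -> U) :
  set_fun A B f -> set_inj A f -> A #<= B.
Proof.
move=> fAB /inj_card_eq fAA; rewrite -(card_le_eql fAA).
by apply: subset_card_le => _ [x Ax <-]; apply: fAB.
Qed.

Lemma card_le_fun T U (A : set T) (B : set U) : A #<= B ->
  A = set0 \/ exists2 f : T -> U, set_fun A B f & set_inj A f.
Proof.
elim/Ppointed: U => U in B *.
  by rewrite (empty_eq0 B) => /card_le0P; left.
by move=> /pcard_leP/injfunPex[f fAB fi]; right; exists f.
Qed.

Lemma card_eq_fun T U (A : set T) (B : set U) : A #= B ->
  A = set0 \/ exists f : T -> U, set_bij A B f.
Proof.
elim/Ppointed: U => U in B *.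
  by rewrite (empty_eq0 B) => /card_eqPle[/card_le0P AB _]; left.
by move=> /card_set_bijP[f fAB]; right; exists f.
Qed.

Lemma card_eqT_cancel T U : [set: T] #= [set: U] ->
  exists (f : T -> U) (g : U -> T), cancel f g /\ cancel g f.
Proof.
case/card_bijP => f [g fK gK].
exists (fun x => val (f (SigSub (mem_set (I : setT x))))).
exists (fun y => val (g (SigSub (mem_set (I : setT y))))).
split=> [x|y].
  rewrite (_ : SigSub _ = f (SigSub (mem_set (I : setT x)))) ?fK //.
  exact: val_inj.
rewrite (_ : SigSub _ = g (SigSub (mem_set (I : setT y)))) ?gK //.
exact: val_inj.
Qed.

Lemma card_le_via T U V (A : set T) (B : set U) (r : set V) (p : V -> T) (q : V -> U) :
  A `<=` p @` r -> q @` r `<=` B -> set_inj r q -> A #<= B.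
Proof.
move=> Ar rB qi; apply: card_le_trans (subset_card_le Ar) _.
apply: card_le_trans (card_image_le p r) _.
by apply: (card_le_inj (f := q)) => // v rv; apply: rB; exists v.
Qed.

Lemma card_le_infinite T U (A : set T) (B : set U) :
  A #<= B -> infinite_set A -> infinite_set B.
Proof. by move=> AB + fB; apply; apply: card_le_finite AB fB. Qed.

Lemma infinite_set_two T (C : set T) : infinite_set C ->
  exists c1 c2, [/\ C c1, C c2 & c1 <> c2].
Proof.
move=> /infiniteP/card_le_fun[e|[e eC ei]].
  by exfalso; have := congr1 (fun S => S 0%N) e; rewrite /= => <-.
exists (e 0%N), (e 1%N); split; [exact: eC | exact: eC |].
by move=> /(ei _ _ (mem_set I) (mem_set I)).
Qed.

Lemma card_leX T T' U U' (A : set T) (A' : set T') (B : set U) (B' : set U') :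
  A #<= A' -> B #<= B' -> A `*` B #<= A' `*` B'.
Proof.
move=> /card_le_fun[->|[f fA fi]]; first by rewrite set0X => _; apply: card_ge0.
move=> /card_le_fun[->|[g gB gi]]; first by rewrite setX0; apply: card_ge0.
apply: (card_le_inj (f := fun p => (f p.1, g p.2))).
  by move=> [x y] [/= Ax By]; split; [apply: fA | apply: gB].
move=> [x y] [x' y'] /set_mem[/= Ax By] /set_mem[/= Ax' By'] [e1 e2].
rewrite (fi x x' (mem_set Ax) (mem_set Ax') e1).
by rewrite (gi y y' (mem_set By) (mem_set By') e2).
Qed.

Lemma card_le_setU T U (A B : set T) (C : set U) : infinite_set C ->
  C `*` C #<= C -> A #<= C -> B #<= C -> A `|` B #<= C.
Proof.
move=> Cinf CC AC BC.
case/card_le_fun: (AC) => [->|[f fA fi]]; first by rewrite set0U.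
case/card_le_fun: (BC) => [->|[g gB gi]]; first by rewrite setU0.
have [c1 [c2 [Cc1 Cc2 c12]]] := infinite_set_two Cinf.
apply: card_le_trans CC.
pose h x := if pselect (A x) then (f x, c1) else (g x, c2).
apply: (card_le_inj (f := h)).
  move=> x ABx; rewrite /h; case: pselect => Ax; split=> //; first exact: fA.
  by apply: gB; case: ABx.
move=> x y /set_mem ABx /set_mem ABy; rewrite /h.
case: pselect => Ax; case: pselect => Ay /= /pair_equal_spec[e1 e2].
- exact: fi (mem_set Ax) (mem_set Ay) e1.
- by case: c12.
- by case: c12.
- by apply: gi e1; apply: mem_set; [case: ABx | case: ABy].
Qed.

Definition one_to_one T U (r : set (T * U)) :=
  (forall x y y', r (x, y) -> r (x, y') -> y = y') /\
  (forall x x' y, r (x, y) -> r (x', y) -> x = x').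

Lemma one_to_one_fst_inj T U (r : set (T * U)) : one_to_one r -> set_inj r fst.
Proof.
move=> [rf _] [x y] [x' y'] /set_mem rxy /set_mem rxy' /= exx'.
by rewrite -exx' in rxy' *; rewrite (rf _ _ _ rxy rxy').
Qed.

Lemma one_to_one_snd_inj T U (r : set (T * U)) : one_to_one r -> set_inj r snd.
Proof.
move=> [_ ri] [x y] [x' y'] /set_mem rxy /set_mem rxy' /= eyy'.
by rewrite -eyy' in rxy' *; rewrite (ri _ _ _ rxy rxy').
Qed.

Lemma total_on_subset_ub T (F : set (set T)) r1 r2 : total_on F subset -> F r1 -> F r2 ->
  exists2 r, F r & r1 `<=` r /\ r2 `<=` r.
Proof.
move=> Ftot Fr1 Fr2; have [r12|r21] := Ftot _ _ Fr1 Fr2.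
- by exists r2 => //; split.
- by exists r1 => //; split.
Qed.

Lemma one_to_one_bigcup T U (F : set (set (T * U))) :
  (forall r, F r -> one_to_one r) -> total_on F subset ->
  one_to_one (\bigcup_(r in F) r).
Proof.
move=> F11 Ftot; split.
- move=> x y y' [r1 Fr1 r1xy] [r2 Fr2 r2xy'].
  have [r Fr [r1r r2r]] := total_on_subset_ub Ftot Fr1 Fr2.
  by have [rf _] := F11 r Fr; apply: rf (r1r _ r1xy) (r2r _ r2xy').
- move=> x x' y [r1 Fr1 r1xy] [r2 Fr2 r2x'y].
  have [r Fr [r1r r2r]] := total_on_subset_ub Ftot Fr1 Fr2.
  by have [_ ri] := F11 r Fr; apply: ri (r1r _ r1xy) (r2r _ r2x'y).
Qed.

Lemma one_to_one_setU T U (r s : set (T * U)) :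
  one_to_one r -> one_to_one s ->
  [disjoint fst @` r & fst @` s] -> [disjoint snd @` r & snd @` s] ->
  one_to_one (r `|` s).
Proof.
move=> [rf ri] [sf si] /disj_setPLR dfst /disj_setPLR dsnd; split.
- move=> x y y' [rxy|sxy] [rxy'|sxy'].
  + exact: rf rxy rxy'.
  + by case: (dfst x (imageP fst rxy)); exact: (imageP fst sxy').
  + by case: (dfst x (imageP fst rxy')); exact: (imageP fst sxy).
  + exact: sf sxy sxy'.
- move=> x x' y [rxy|sxy] [rx'y|sx'y].
  + exact: ri rxy rx'y.
  + by case: (dsnd y (imageP snd rxy)); exact: (imageP snd sx'y).
  + by case: (dsnd y (imageP snd rx'y)); exact: (imageP snd sxy).
  + exact: si sxy sx'y.
Qed.

Lemma one_to_one_set1 T U (x : T) (y : U) : one_to_one [set (x, y)].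
Proof. by split=> [? ? ? [_ ->] [_ ->]|? ? ? [-> _] [-> _]]. Qed.

Lemma card_le_total T U (A : set T) (B : set U) : A #<= B \/ B #<= A.
Proof.
pose P (r : set (T * U)) := r `<=` A `*` B /\ one_to_one r.
have [r [[rAB r11] rmax]] : exists r, P r /\ forall r', r `<` r' -> ~ P r'.
  apply: Zorn_bigcup => F FP Ftot; split; first by apply: bigcup_sub => r /FP[].
  by apply: one_to_one_bigcup => // r /FP[].
have rA : fst @` r `<=` A by move=> _ [p /rAB[? _] <-].
have rB : snd @` r `<=` B by move=> _ [p /rAB[_ ?] <-].
have [Ar|/existsNP[x0 /not_implyP[Ax0 nx0]]] := pselect (A `<=` fst @` r).
  by left; apply: card_le_via Ar rB (one_to_one_snd_inj r11).
have [Br|/existsNP[y0 /not_implyP[By0 ny0]]] := pselect (B `<=` snd @` r).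
  by right; apply: card_le_via Br rA (one_to_one_fst_inj r11).
exfalso; apply: (rmax (r `|` [set (x0, y0)])).
  split=> [p rp|/(_ (x0, y0) (or_intror erefl)) rxy0]; first by left.
  by apply: nx0; exists (x0, y0).
split; first by move=> p [/rAB //|->].
apply: one_to_one_setU r11 (one_to_one_set1 x0 y0) _ _; rewrite image_set1.
- by apply/disj_setPLR => x rx /= ex; apply: nx0; rewrite -ex.
- by apply/disj_setPLR => y ry /= ey; apply: ny0; rewrite -ey.
Qed.

(* [r] is the graph of a bijection from [X `*` X] onto [X := snd @` r] and [X `<=` A]. *)
Definition pairing_graph T (A : set T) (r : set ((T * T) * T)) :=
  [/\ one_to_one r, snd @` r `<=` A & fst @` r = snd @` r `*` snd @` r].

Lemma card_le_pairing_graph T (A : set T) r :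
  pairing_graph A r -> snd @` r `*` snd @` r #<= snd @` r.
Proof.
move=> [r11 _ rdom].
by apply: (card_le_via (p := fst)) (one_to_one_snd_inj r11); rewrite ?rdom.
Qed.

Lemma pairing_graph_bigcup T (A : set T) (F : set (set ((T * T) * T))) :
  (forall r, F r -> pairing_graph A r) -> total_on F subset ->
  pairing_graph A (\bigcup_(r in F) r).
Proof.
move=> FP Ftot; split.
- by apply: one_to_one_bigcup => // r /FP[].
- by rewrite image_bigcup; apply: bigcup_sub => r /FP[].
apply/seteqP; split.
  move=> _ [p [r Fr rp] <-]; have [_ _ rdom] := FP r Fr.
  have [ra rb] : (snd @` r `*` snd @` r) p.1 by rewrite -rdom; exists p.
  by split; apply: image_subset (bigcup_sup Fr) _ _.
move=> q [[pa [r1 Fr1 r1pa] ea] [pb [r2 Fr2 r2pb] eb]].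
have [r Fr [r1r r2r]] := total_on_subset_ub Ftot Fr1 Fr2.
have [_ _ rdom] := FP r Fr.
suff : (fst @` r) q by apply: image_subset (bigcup_sup Fr) _.
rewrite rdom; split; [rewrite -ea | rewrite -eb]; apply: imageP.
- exact: r1r.
- exact: r2r.
Qed.

Section pairing_graph_extension.
Variables (T : Type) (A X Y : set T) (r : set ((T * T) * T)) (g : T * T -> T).
Hypotheses (rP : pairing_graph A r) (rX : snd @` r = X).
Hypotheses (YA : Y `<=` A) (XY : [disjoint X & Y]).
Let D := (X `|` Y) `*` (X `|` Y) `\` X `*` X.
Hypothesis gD : set_bij D Y g.
Let G := (fun q => (q, g q)) @` D.

Lemma snd_image_graph : snd @` G = Y.
Proof.
rewrite /G image_comp; case: gD => gDY _ gsurj.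
by apply/seteqP; split=> [_ [q Dq <-]|//]; apply: gDY.
Qed.

Lemma snd_image_pairing_graph_setU : snd @` (r `|` G) = X `|` Y.
Proof. by rewrite image_setU rX snd_image_graph. Qed.

Lemma pairing_graph_setU : pairing_graph A (r `|` G).
Proof.
have [r11 rA rdom] := rP.
have fstG : fst @` G = D by rewrite /G image_comp image_id.
split.
- apply: one_to_one_setU r11 _ _ _.
  + split=> [q z z' [q1 _ [<- <-]] [q2 _ [-> <-]] //|q q' z [q1 Dq1 [<- <-]]].
    case=> q2 Dq2 [<- e]; case: gD => _ ginj _.
    exact: ginj (mem_set Dq1) (mem_set Dq2) (esym e).
  + by rewrite fstG rdom rX; apply/disj_setPLR => q XXq [].
  + by rewrite snd_image_graph rX.
- by rewrite snd_image_pairing_graph_setU subUset -rX.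
- rewrite snd_image_pairing_graph_setU image_setU fstG rdom rX setDUK //.
  by apply: setSX; apply: subsetUl.
Qed.

End pairing_graph_extension.

Lemma card_setXD_eq T (X Y : set T) : infinite_set X -> X `*` X #<= X ->
  X #= Y -> [disjoint X & Y] -> (X `|` Y) `*` (X `|` Y) `\` X `*` X #= Y.
Proof.
move=> Xinf XX /card_eqPle[XY YX] /disj_setPRL dXY.
have Yinf := card_le_infinite XY Xinf.
have YY : Y `*` Y #<= Y := card_le_trans (card_leX YX YX) (card_le_trans XX XY).
have ZY : X `|` Y #<= Y := card_le_setU Yinf YY XY (card_lexx Y).
apply: Cantor_Bernstein.
  apply: card_le_trans (card_le_trans (card_leX ZY ZY) YY).
  by apply: subset_card_le => q [].
apply: (card_le_inj (f := fun y => (y, y))) => [y Yy|y y' _ _ [] //].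
by split=> [|[/= /(dXY y Yy)]]; first by split; right.
Qed.

Lemma infinite_countable_square T (A : set T) : infinite_set A ->
  exists2 N : set T, N `<=` A & infinite_set N /\ N `*` N #= N.
Proof.
move=> /infiniteP/card_le_fun[e|[e eA ei]].
  by exfalso; have := congr1 (fun S => S 0%N) e; rewrite /= => <-.
have eN : range e #= [set: nat] := inj_card_eq ei.
have /card_eqPle[Nnat natN] := eN.
exists (range e); first by move=> _ [n _ <-]; apply: eA.
split; first by apply/infiniteP; rewrite (card_le_eqr eN).
apply: Cantor_Bernstein.
  apply: card_le_trans (card_leX Nnat Nnat) _.
  by rewrite setXTT (card_le_eql card_nat2).
by apply: (card_le_inj (f := fun x => (x, x))) => // x y _ _ [].
Qed.

Lemma pairing_graph_maximal T (A : set T) r : pairing_graph A r ->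
  infinite_set (snd @` r) -> (forall r', r `<` r' -> ~ pairing_graph A r') ->
  A `\` snd @` r #<= snd @` r.
Proof.
move=> rP Xinf rmax; set X := snd @` r.
have [//|/card_le_fun[X0|[e eX ei]]] := card_le_total (A `\` X) X.
  by exfalso; apply: Xinf; rewrite -/X X0; exact: finite_set0.
exfalso.
have XY : X #= e @` X by rewrite card_eq_sym; exact: inj_card_eq.
have YA : e @` X `<=` A by move=> _ [x Xx <-]; have [] := eX x Xx.
have dXY : [disjoint X & e @` X] by apply/disj_setPRL => _ [x Xx <-]; have [] := eX x Xx.
have [x Xx] := infinite_setN0 Xinf.
have nXex : ~ X (e x) by have [] := eX x Xx.
have DeX : ((X `|` e @` X) `*` (X `|` e @` X) `\` X `*` X) (e x, e x).
  by split=> [|[/nXex]//]; split; right; exists x.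
have [D0|[g gD]] := card_eq_fun (card_setXD_eq Xinf (card_le_pairing_graph rP) XY dXY).
  by rewrite D0 in DeX.
apply: (rmax _ _ (pairing_graph_setU rP erefl YA dXY gD)).
split=> [q rq|]; first by left.
move=> /(_ ((e x, e x), g (e x, e x)) (or_intror (imageP _ DeX))) rex.
have [_ _ rdom] := rP.
have : (fst @` r) (e x, e x) by exists ((e x, e x), g (e x, e x)).
by rewrite rdom => -[/nXex].
Qed.

Lemma pairing_graph0 T (A : set T) : pairing_graph A set0.
Proof. by split; rewrite ?image_set0 ?set0X //; split. Qed.

Lemma infinite_pairing_graph T (A : set T) : infinite_set A ->
  exists2 r, pairing_graph A r & infinite_set (snd @` r).
Proof.
move=> Ainf.
have [N NA [Ninf /card_eq_fun[NN0|[b bN]]]] := infinite_countable_square Ainf.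
  have [n Nn] := infinite_setN0 Ninf.
  by have : (N `*` N) (n, n) by []; rewrite NN0.
have dN : [disjoint set0 & N] by apply/disj_setPLR.
have DN : (set0 `|` N) `*` (set0 `|` N) `\` set0 `*` set0 = N `*` N.
  by rewrite set0U set0X setD0.
rewrite -DN in bN.
eexists.
  exact: pairing_graph_setU (pairing_graph0 A) (image_set0 _) NA dN bN.
by rewrite (snd_image_pairing_graph_setU (image_set0 _) bN) set0U.
Qed.

Lemma card_setXX_le T (A : set T) : infinite_set A -> A `*` A #<= A.
Proof.
move=> Ainf; have [r0 r0P r0inf] := infinite_pairing_graph Ainf.
(* the union of the empty chain is [set0], whence the first disjunct *)
pose P r := pairing_graph A r /\ (r = set0 \/ r0 `<=` r).
have [r [[rP r0r] rmax]] : exists r, P r /\ forall r', r `<` r' -> ~ P r'.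
  apply: Zorn_bigcup => F FP Ftot; split.
    by apply: pairing_graph_bigcup => // r /FP[].
  have [[r Fr r0r]|nF] := pselect (exists2 r, F r & r0 `<=` r).
    by right; apply: subset_trans r0r (bigcup_sup Fr).
  left; apply/seteqP; split => // p [r Fr rp].
  by have [_ [r_0|r0r]] := FP r Fr; [rewrite r_0 in rp | case: nF; exists r].
have {}r0r : r0 `<=` r.
  case: r0r => // r_0; exfalso; apply: (rmax r0); last by split => //; right.
  rewrite r_0; split=> //; rewrite subset0 => r00; apply: r0inf.
  by rewrite r00 image_set0; exact: finite_set0.
have Xinf : infinite_set (snd @` r) := sub_infinite_set (image_subset snd r0r) r0inf.
have AX : A `\` snd @` r #<= snd @` r.
  apply: (pairing_graph_maximal rP Xinf) => r' rr' r'P; apply: (rmax r' rr').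
  by split => //; right; apply: subset_trans r0r (properW rr').
have XX := card_le_pairing_graph rP.
have [_ XA _] := rP.
have AXle : A #<= snd @` r.
  apply: card_le_trans (card_le_setU Xinf XX (card_lexx _) AX).
  by apply: subset_card_le => x Ax; have [Xx|nXx] := pselect ((snd @` r) x); [left|right].
exact: card_le_trans (card_leX AXle AXle) (card_le_trans XX (subset_card_le XA)).
Qed.

Lemma card_le_lt_trans T U V (A : set T) (B : set U) (C : set V) :
  A #<= B -> card_lt B C -> card_lt A C.
Proof.
move=> AB [BC nCB]; split; first exact: card_le_trans AB BC.
by move=> CA; apply: nCB; apply: card_le_trans CA AB.
Qed.

Lemma card_lt_setX T U V (S : set T) (K : set U) (M : set V) :
  infinite_set K -> card_lt K M -> card_lt S M -> card_lt (S `*` K) M.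
Proof.
move=> Kinf KM SM; have [SK|KS] := card_le_total S K.
  apply: card_le_lt_trans KM.
  exact: card_le_trans (card_leX SK (card_lexx K)) (card_setXX_le Kinf).
apply: card_le_lt_trans SM.
have SS := card_setXX_le (card_le_infinite KS Kinf).
exact: card_le_trans (card_leX (card_lexx S) KS) SS.
Qed.

Lemma card_setX_absorb T U : infinite_set [set: U] ->
  [set: U] #<= [set: T] -> [set: T * U] #= [set: T].
Proof.
move=> Uinf UT; rewrite -setXTT; apply: Cantor_Bernstein.
  have TT := card_setXX_le (card_le_infinite UT Uinf).
  exact: card_le_trans (card_leX (card_lexx _) UT) TT.
have [u _] := infinite_setN0 Uinf.
by apply: (card_le_inj (f := fun t => (t, u))) => // t t' _ _ [].
Qed.

Lemma card_fun_bool T : infinite_set [set: T] -> [set: T -> bool] #= [set: T -> T].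
Proof.
move=> Tinf; have [t1 [t2 [_ _ t12]]] := infinite_set_two Tinf.
apply: Cantor_Bernstein.
  apply: (card_le_inj (f := fun u x => if u x then t1 else t2)) => // u v _ _ e.
  apply: funext => x; have := congr1 (fun h => h x) e => /=.
  by case: (u x); case: (v x) => // /esym.
have := card_setXX_le Tinf; rewrite setXTT => /card_le_fun[TT0|[j _ ji]].
  by have : [set: T * T] (t1, t1) by []; rewrite TT0.
(* a map u is encoded by the characteristic function of the j-image of its graph *)
apply: (card_le_inj (f := fun u k => `[< exists x, j (x, u x) = k >])) => // u v _ _ e.
apply: funext => x.
have : exists x', j (x', v x') = j (x, u x).
  apply/asboolP; rewrite -(congr1 (fun h => h (j (x, u x))) e).
  by apply/asboolP; exists x.
by case=> x' /(ji _ _ (mem_set I) (mem_set I)) [-> ->].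
Qed.

Section fiberwise.
Variables (M P : Type) (phi : M -> M * P) (phi' : M * P -> M).
Hypotheses (phiK : cancel phi phi') (phi'K : cancel phi' phi).

Definition fiberwise X Y (Psi : (P -> X) -> (P -> Y)) (f : M -> X) : M -> Y :=
  fun x => Psi (fun p => f (phi' ((phi x).1, p))) (phi x).2.

Lemma fiberwiseK X Y (Psi : (P -> X) -> (P -> Y)) Psi' :
  cancel Psi Psi' -> cancel (fiberwise Psi) (fiberwise Psi').
Proof.
move=> PsiK f; apply: funext => x; rewrite /fiberwise.
under [X in Psi' X]funext => p do rewrite phi'K /=.
by rewrite PsiK -surjective_pairing phiK.
Qed.

Lemma fiberwise_box_open X Y (Psi : (P -> X) -> (P -> Y)) :
  (forall S : set M, card_lt S [set: M] -> card_lt (S `*` [set: P]) [set: M]) ->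
  forall V, box_open V -> box_open (fiberwise Psi @^-1` V).
Proof.
move=> small V Vo f /Vo[S [s [SM [fS SV]]]].
pose S' := [set x | ((fun y => (phi y).1) @` S) (phi x).1].
exists S', f; split.
  have S1M := card_le_lt_trans (card_image_le (fun y => (phi y).1) S) SM.
  apply: card_le_lt_trans (small _ S1M).
  by apply: (card_le_inj (f := phi)) => [x S'x|x y _ _]; [split | exact: (can_inj phiK)].
split=> // f' f'S'; apply: SV => i Si; rewrite -(fS i Si) /fiberwise.
congr (Psi _ _); apply: funext => p; apply: f'S'.
by rewrite /S' /= phi'K; exists i.
Qed.
End fiberwise.

Theorem mainTheorem6 (K : Type) (ltK : K -> K -> Prop)
  (M : Type) (ltM : M -> M -> Prop) :
  regular_infinite_cardinal ltK ->
  is_cardinal ltM ->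
  card_lt [set: K] [set: M] ->
  cf_is ltM K ->
  homeomorphic (@box_open M bool) (@box_open M K).
Proof.
move=> [_ [Kinf _]] _ KltM _.
have MK := card_esym (card_setX_absorb Kinf (proj1 KltM)).
have [phi [phi' [phiK phi'K]]] := card_eqT_cancel MK.
have [psi [psi' [psiK psi'K]]] := card_eqT_cancel (card_fun_bool Kinf).
have small (S : set M) : card_lt S [set: M] -> card_lt (S `*` [set: K]) [set: M].
  exact: card_lt_setX Kinf KltM.
exists (fiberwise phi phi' psi), (fiberwise phi phi' psi').
do !split; [exact: (fiberwiseK phiK phi'K psiK) | exact: (fiberwiseK phiK phi'K psi'K) |
  exact: (fiberwise_box_open phiK phi'K small)..].
Qed.
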